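(* In the binary noisy-label setting described in the context, for every classifier $h$ and every function $g:\{-1,+1\}^2\to\mathrm{dom}(f^* )$, $$\widetilde{d}_f(h,g)=(1-e_+-e_-)\,d_f(h,g)+\mathrm{Bias}_f(h,g).$$
   Context: $(X,Y)$ is a random pair with features $X\in\mathcal X$ and clean label $Y\in\{-1,+1\}$. A noisy label $\tilde Y\in\{-1,+1\}$ is generated from $Y$, conditionally independently of $X$ given $Y$, with noise rates $e_+={\mathbb P}(\tilde Y=-1\mid Y=+1)$, $e_-={\mathbb P}(\tilde Y=+1\mid Y=-1)$, $e_++e_-<1$. A classifier is a measurable map $h:\mathcal X\to\{-1,+1\}$. $P=P_{h\times Y}$ is the joint law of $(h(X),Y)$ on $\{-1,+1\}^2$ and $Q=Q_{h\times Y}$ the product of its marginals ${\mathbb P}(h(X)=y){\mathbb P}(Y=y')$; $\tilde P,\tilde Q$ are defined identically with $\tilde Y$ in place of $Y$. $f$ is convex with $f(1)=0$ and $f^*(u)=\sup_v\{uv-f(v)\}$ is its Fenchel conjugate with domain $\mathrm{dom}(f^* )$. Define $d_f(h,g)=\mathbb E_{Z\sim P}[g(Z)]-\mathbb E_{Z\sim Q}[f^*(g(Z))]$ and $\widetilde d_f(h,g)=\mathbb E_{Z\sim \tilde P}[g(Z)]-\mathbb E_{Z\sim \tilde Q}[f^*(g(Z))]$. For $y\in\{-1,+1\}$, $\Delta^y_f(h,g)=\mathbb E_X[g(h(X),y)]-\mathbb E_X[f^*(g(h(X),y))]$, and $\mathrm{Bias}_f(h,g)=e_+\Delta^{-1}_f(h,g)+e_-\Delta^{+1}_f(h,g)$.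 *)

From HB Require Import structures.
From mathcomp Require Import all_boot all_order all_algebra.
From mathcomp Require Import all_classical all_reals all_analysis.
Set Implicit Arguments. Unset Strict Implicit. Unset Printing Implicit Defensive.
Import Order.TTheory GRing.Theory Num.Theory.
Local Open Scope classical_set_scope.
Local Open Scope ring_scope.

(* Binary labels {-1,+1} are encoded by bool: true = +1, false = -1. *)
Notation lab := bool (only parsing).

Section Defs.
Variable R : realType.

(* Convexity of an extended-real valued function f : R -> \bar R
   (mathcomp's convention 0 * +oo = 0). *)
Definition econvex (f : R -> \bar R) : Prop :=
  forall (x y t : R), (0 <= t <= 1)%R ->
    (f (t * x + (1 - t) * y)%R <= t%:E * f x + (1 - t)%R%:E * f y)%E.

Definition fstar (f : R -> \bar R) (u : R) : \bar R :=
  ereal_sup (range (fun v : R => ((u * v)%:E - f v)%E)).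

Definition dom_fstar (f : R -> \bar R) : set R := [set u | (fstar f u < +oo)%E].

Variables (d : measure_display) (T : measurableType d) (P : probability T R).

Definition prob2 (U V : T -> lab) (a b : lab) : R :=
  fine (P ([set t | U t = a] `&` [set t | V t = b])).
Definition prob1 (U : T -> lab) (a : lab) : R := fine (P [set t | U t = a]).

Definition E_joint (U V : T -> lab) (phi : lab -> lab -> R) : R :=
  \sum_(a : lab) \sum_(b : lab) prob2 U V a b * phi a b.
Definition E_prod (U V : T -> lab) (phi : lab -> lab -> R) : R :=
  \sum_(a : lab) \sum_(b : lab) (prob1 U a * prob1 V b) * phi a b.

(* d_f(h,g) with HX = h(X) and label V (= Y, or Ytilde for the noisy version);
   on dom(fstar) the conjugate is finite, so we take its real value. *)
Definition dfun (f : R -> \bar R) (HX V : T -> lab) (g : lab -> lab -> R) : R :=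
  E_joint HX V g - E_prod HX V (fun a b => fine (fstar f (g a b))).

Definition Delta (f : R -> \bar R) (HX : T -> lab) (g : lab -> lab -> R) (y : lab) : R :=
  \sum_(a : lab) prob1 HX a * g a y
  - \sum_(a : lab) prob1 HX a * fine (fstar f (g a y)).

(* Bias_f(h,g) = e_+ Delta^{-1} + e_- Delta^{+1} (labels: false = -1, true = +1) *)
Definition Bias (f : R -> \bar R) (HX : T -> lab) (g : lab -> lab -> R)
    (ep em : R) : R :=
  ep * Delta f HX g false + em * Delta f HX g true.
End Defs.

From HB Require Import structures.
From mathcomp Require Import all_boot all_order all_algebra.
From mathcomp Require Import all_classical all_reals all_analysis.
From mathcomp Require Import ring lra.
Set Implicit Arguments. Unset Strict Implicit. Unset Printing Implicit Defensive.
Import Order.TTheory GRing.Theory Num.Theory.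
Local Open Scope classical_set_scope.
Local Open Scope ring_scope.

(* Conditional independence of h(X) and Ytilde given Y makes the joint law of
   (h(X), Ytilde) the joint law of (h(X), Y) pushed through the noise channel
   T(y, b) = P(Ytilde = b | Y = y), and the law of Ytilde the law of Y pushed
   through the same channel.  Both sides of the identity are then linear in
   the joint law of (h(X), Y), and they agree because the rows of T sum to 1
   and so do the probabilities of Y. *)

Definition noise_channel {R : pzRingType} (ep em : R) (y b : bool) : R :=
  if y then (if b then 1 - ep else ep) else (if b then em else 1 - em).

Section LabelProbabilities.
Variables (R : realType) (d : measure_display) (T : measurableType d).
Variable P : probability T R.

Definition measurable_label (V : T -> bool) : Prop := forall b, measurable [set t | V t = b].

Lemma fine_measure_ge0 (A : set T) : 0 <= fine (P A).
Proof. exact/fine_ge0/measure_ge0. Qed.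

Lemma fine_measureIl (A B : set T) : measurable A -> measurable B ->
  fine (P (A `&` B)) <= fine (P A).
Proof.
move=> mA mB; rewrite fine_le ?fin_num_measure//; first exact: measurableI.
exact: measureIl.
Qed.

Lemma fine_measure_fibers (V : T -> bool) (A : set T) :
  measurable_label V -> measurable A ->
  fine (P A) = \sum_(b : bool) fine (P (A `&` [set t | V t = b])).
Proof.
move=> mV mA; have mAV b : measurable (A `&` [set t | V t = b]).
  exact: measurableI.
rewrite big_bool /= -fineD ?fin_num_measure// -measureU//.
- congr (fine (P _)); apply/seteqP; split=> [t At|t [] []//].
  by case Vt: (V t); [left|right].
- by apply/seteqP; split=> t //= [[_ ->] [_]].
Qed.

Lemma prob1_suml (U : T -> bool) : measurable_label U ->
  \sum_(a : bool) prob1 P U a = 1.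
Proof.
move=> mU; rewrite /prob1 -[1]/(fine 1%E) -(probability_setT P).
rewrite (fine_measure_fibers mU measurableT).
by apply: eq_bigr => a _; rewrite setTI.
Qed.

Lemma prob2C (U V : T -> bool) (a b : bool) : prob2 P U V a b = prob2 P V U b a.
Proof. by rewrite /prob2 setIC. Qed.

Section TwoLabels.
Variables (U V : T -> bool).
Hypotheses (mU : measurable_label U) (mV : measurable_label V).

Lemma prob1_sum_prob2 (a : bool) : prob1 P U a = \sum_(b : bool) prob2 P U V a b.
Proof. exact: fine_measure_fibers. Qed.

Lemma prob1_sum_prob2r (b : bool) : prob1 P V b = \sum_(a : bool) prob2 P U V a b.
Proof.
rewrite /prob1 (fine_measure_fibers mU (mV b)).
by apply: eq_bigr => a _; rewrite prob2C /prob2.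
Qed.

End TwoLabels.

Lemma fine_measure_cond_indep (A B C : set T) (r : R) :
  measurable A -> measurable B -> measurable C ->
  fine (P (A `&` B `&` C)) * fine (P B) = fine (P (A `&` B)) * fine (P (B `&` C)) ->
  fine (P (B `&` C)) = r * fine (P B) ->
  fine (P (A `&` B `&` C)) = fine (P (A `&` B)) * r.
Proof.
move=> mA mB mC indep rC.
have mAB : measurable (A `&` B) by exact: measurableI.
have ABC_AB := fine_measureIl mAB mC.
have AB_B : fine (P (A `&` B)) <= fine (P B) by rewrite setIC; exact: fine_measureIl.
have ABC_ge0 := fine_measure_ge0 (A `&` B `&` C).
have [B0|B_neq0] := eqVneq (fine (P B)) 0.
  have AB0 : fine (P (A `&` B)) = 0 by have := fine_measure_ge0 (A `&` B); lra.
  by rewrite AB0 mul0r; lra.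
by apply: (mulIf B_neq0); rewrite indep rC mulrA.
Qed.

Section NoisyLabel.
Variables (Y Yt : T -> bool) (ch : bool -> bool -> R).
Hypotheses (mY : measurable_label Y) (mYt : measurable_label Yt).
Hypothesis channel : forall y b, prob2 P Y Yt y b = prob1 P Y y * ch y b.

Lemma prob1_through_channel (b : bool) :
  prob1 P Yt b = \sum_(y : bool) prob1 P Y y * ch y b.
Proof. by rewrite (prob1_sum_prob2r mY mYt); apply: eq_bigr => y _. Qed.

Lemma prob2_through_channel (U : T -> bool) : measurable_label U ->
  (forall a y b,
     fine (P ([set t | U t = a] `&` [set t | Y t = y] `&` [set t | Yt t = b]))
       * prob1 P Y y = prob2 P U Y a y * prob2 P Y Yt y b) ->
  forall a b, prob2 P U Yt a b = \sum_(y : bool) prob2 P U Y a y * ch y b.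
Proof.
move=> mU indep a b; rewrite /prob2 (fine_measure_fibers mY); last exact: measurableI.
apply: eq_bigr => y _; rewrite setIAC.
by apply: fine_measure_cond_indep => //; rewrite -/(prob2 P Y Yt y b) channel mulrC.
Qed.

End NoisyLabel.

Lemma prob2_noise_channel (Y Yt : T -> bool) (ep em : R) :
  measurable_label Y -> measurable_label Yt ->
  prob2 P Yt Y false true = ep * prob1 P Y true ->
  prob2 P Yt Y true false = em * prob1 P Y false ->
  forall y b, prob2 P Y Yt y b = prob1 P Y y * noise_channel ep em y b.
Proof.
move=> mY mYt ep_rate em_rate y b.
have := prob1_sum_prob2 mY mYt y; rewrite big_bool /= !(prob2C Y Yt y).
by case: y; case: b; rewrite /= ?ep_rate ?em_rate; nra.
Qed.

End LabelProbabilities.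

Theorem theorem3 (R : realType) (d : measure_display) (T : measurableType d)
    (P : probability T R) (dx : measure_display) (Xs : measurableType dx)
    (X : T -> Xs) (Y Yt : T -> bool) (ep em : R) (f : R -> \bar R)
    (h : Xs -> bool) (g : bool -> bool -> R) :
  measurable_fun setT X ->
  (forall b, measurable [set t | Y t = b]) ->
  (forall b, measurable [set t | Yt t = b]) ->
  (* noise rates: e_+ = P(Yt = -1 | Y = +1), e_- = P(Yt = +1 | Y = -1) *)
  prob2 P Yt Y false true = ep * prob1 P Y true ->
  prob2 P Yt Y true false = em * prob1 P Y false ->
  ep + em < 1 ->
  (* Yt is conditionally independent of X given Y *)
  (forall (A : set Xs) (y yt : bool), measurable A ->
     fine (P (X @^-1` A `&` [set t | Y t = y] `&` [set t | Yt t = yt]))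
       * prob1 P Y y
     = fine (P (X @^-1` A `&` [set t | Y t = y])) * prob2 P Y Yt y yt) ->
  (* f convex, proper (never -oo), with f(1) = 0 *)
  econvex f -> (forall v, f v != -oo%E) -> f 1 = 0%E ->
  (* h is a classifier: measurable map into {-1,+1} *)
  (forall b, measurable (h @^-1` [set b])) ->
  (* g : {-1,+1}^2 -> dom fstar *)
  (forall a b, dom_fstar f (g a b)) ->
  dfun P f (h \o X) Yt g
  = (1 - ep - em) * dfun P f (h \o X) Y g + Bias P f (h \o X) g ep em.
Proof.
move=> mX mY mYt ep_rate em_rate _ indep _ _ _ mh _.
have mHX : measurable_label (h \o X).
  by move=> a; rewrite -[E in measurable E]setTI; exact: mX measurableT _ (mh a).
have channel := prob2_noise_channel mY mYt ep_rate em_rate.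
have joint := prob2_through_channel mY mYt channel mHX
  (fun a y b => indep (h @^-1` [set a]) y b (mh a)).
have Y_false : prob1 P Y false = 1 - prob1 P Y true.
  by have := prob1_suml P mY; rewrite big_bool /=; lra.
rewrite /dfun /E_joint /E_prod /Bias /Delta !big_bool /=.
rewrite !joint !(prob1_through_channel mY mYt channel).
rewrite !(prob1_sum_prob2 P mHX mY) !big_bool /= Y_false.
(* With these atoms opaque, [ring] no longer compares probabilities up to conversion. *)
move: (prob2 P (h \o X) Y) (prob1 P Y true) (fstar f) => pXY pY fstar_f.
by rewrite /noise_channel; ring.
Qed.
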